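(* Let $\alpha=(\alpha_k)_{k\in\mathbb{N}}\in\ell^2$. For natural numbers $a<b$, the quantity $L([a,b])$ is nonincreasing as $a$ increases (with $b$ fixed) and nondecreasing as $b$ increases (with $a$ fixed).
   Context: $\mathbb{N}=\{0,1,2,\dots\}$. For a natural interval $I=[a,b]\cap\mathbb{N}$, write $\|f\|_{2,I}=(\sum_{k\in I}|f(k)|^2)^{1/2}$, $\mu(I)=\sum_{k\in I}|\alpha_k|^2$, and for $f\in\ell^2$ $$l(I,f)=\sum_{k\in I}\sum_{n\in I\setminus\{k\}}\Big|\alpha_k\alpha_n\sum_{j=\min(k,n)+1}^{\max(k,n)}f(j)\Big|^2.$$ Define $L(I)=\big(\sup_{\|f\|_{2,I}\le1} l(I,f)/\mu(I)\big)^{1/2}$ (supremum over $f\in\ell^2$ supported in $I$), and $L(I)=0$ if $\alpha_k=0$ for all $k\in I$. *)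

From Stdlib Require Import Reals ClassicalEpsilon.
From Coquelicot Require Import Coquelicot.
Open Scope R_scope.

(* The natural interval I = [a,b] ∩ N is represented by its endpoints a b. *)

Definition norm2_sq (a b : nat) (f : nat -> C) : R :=
  sum_n_m (fun k => (Cmod (f k)) ^ 2) a b.

Definition mu (alpha : nat -> C) (a b : nat) : R :=
  sum_n_m (fun k => (Cmod (alpha k)) ^ 2) a b.

Definition partial_sum (f : nat -> C) (k n : nat) : C :=
  sum_n_m f (S (Nat.min k n)) (Nat.max k n).

Definition l_fun (alpha : nat -> C) (a b : nat) (f : nat -> C) : R :=
  sum_n_m (fun k =>
    sum_n_m (fun n =>
      if Nat.eqb n k then 0
      else (Cmod (alpha k * alpha n * partial_sum f k n)) ^ 2) a b) a b.

Definition supported_in (a b : nat) (f : nat -> C) : Prop :=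
  forall k, (k < a \/ b < k)%nat -> f k = 0%C.

Definition ratio_set (alpha : nat -> C) (a b : nat) : R -> Prop :=
  fun x => exists f : nat -> C,
    supported_in a b f /\ norm2_sq a b f <= 1 /\
    x = l_fun alpha a b f / mu alpha a b.

(* L(I): 0 if alpha vanishes on I, otherwise the square root of the supremum
   (the supremum is finite since I is finite). *)
Definition L (alpha : nat -> C) (a b : nat) : R :=
  match excluded_middle_informative
          (forall k, (a <= k <= b)%nat -> alpha k = 0%C) with
  | left _ => 0
  | right _ => sqrt (real (Lub_Rbar (ratio_set alpha a b)))
  end.

Definition in_l2 (alpha : nat -> C) : Prop :=
  ex_series (fun k => (Cmod (alpha k)) ^ 2).

From Stdlib Require Import Reals Arith Lra Lia ClassicalEpsilon Classical.
From Coquelicot Require Import Coquelicot.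
Open Scope R_scope.

(* Write x_k = |alpha_k|^2 and G n = f 0 + ... + f n.  Every inner sum of l(I,f)
   is a difference G n - G k, so l(I,f) is the energy
     sum_{k,n in I} x_k x_n |G n - G k|^2 = 2 (mu(I) sum_I x |G|^2 - |sum_I x G|^2).
   The energy does not see constant shifts of G; shifting G to vanish at the point
   added to I leaves both moments of G unchanged while mu(I) grows, so
   l(I,f)/mu(I) = 2 sum_I x |G|^2 - 2 |sum_I x G|^2 / mu(I) can only increase.
   A function supported in I keeps its norm on the larger interval, hence the
   supremum defining L increases as well. *)

(* Coquelicot sums live in [AbelianMonoid.sort _], which [ring] does not recognise. *)
Ltac eq_in T := match goal with |- @eq _ ?l ?r => change (@eq T l r) end.

Lemma Rdiv_le_of_cross_mul_le a b c d :
  0 < b -> 0 < d -> a * d <= c * b -> a / b <= c / d.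
Proof.
  intros Hb Hd H.
  replace (a / b) with (a * d * / (b * d)) by (field; lra).
  replace (c / d) with (c * b * / (b * d)) by (field; lra).
  apply Rmult_le_compat_r; [|exact H].
  apply Rlt_le, Rinv_0_lt_compat, Rmult_lt_0_compat; assumption.
Qed.

Lemma real_Lub_Rbar_le (E E' : R -> Prop) :
  (exists y, E y) -> (exists M, forall y, E' y -> y <= M) ->
  (forall y, E y -> exists y', E' y' /\ y <= y') ->
  real (Lub_Rbar E) <= real (Lub_Rbar E').
Proof.
  intros [y0 Hy0] [M HM] Hdom.
  destruct (Hdom y0 Hy0) as (y0' & Hy0' & _).
  destruct (Lub_Rbar_correct E) as [ub lub].
  destruct (Lub_Rbar_correct E') as [ub' lub'].
  destruct (Lub_Rbar E') as [r'| |].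
  2: { destruct (lub' (Finite M) HM). }
  2: { destruct (ub' y0' Hy0'). }
  assert (HE : is_ub_Rbar E r').
  { intros y Hy. destruct (Hdom y Hy) as (y' & Hy' & Hyy').
    exact (Rle_trans _ _ _ Hyy' (ub' y' Hy')). }
  specialize (lub r' HE).
  destruct (Lub_Rbar E) as [r| |]; simpl.
  - exact lub.
  - destruct lub.
  - destruct (ub y0 Hy0).
Qed.

Lemma sum_n_m_Rplus (u v : nat -> R) p q :
  sum_n_m (fun k => u k + v k) p q = sum_n_m u p q + sum_n_m v p q.
Proof. exact (sum_n_m_plus u v p q). Qed.

Lemma sum_n_m_Rmult_l (c : R) (u : nat -> R) p q :
  sum_n_m (fun k => c * u k) p q = c * sum_n_m u p q.
Proof. exact (sum_n_m_mult_l c u p q). Qed.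

Lemma sum_n_m_le_loc (u v : nat -> R) p q :
  (forall k, (p <= k <= q)%nat -> u k <= v k) -> sum_n_m u p q <= sum_n_m v p q.
Proof.
  intros Huv.
  rewrite (sum_n_m_ext_loc v (fun k => Rmax (u k) (v k)))
    by (intros k Hk; symmetry; apply Rmax_right, Huv, Hk).
  apply sum_n_m_le; intros k; apply Rmax_l.
Qed.

Lemma sum_n_m_nonneg (u : nat -> R) p q :
  (forall k, (p <= k <= q)%nat -> 0 <= u k) -> 0 <= sum_n_m u p q.
Proof.
  intros Hu. apply Rle_trans with (sum_n_m (fun _ => 0) p q).
  - rewrite sum_n_m_const, Rmult_0_r. apply Rle_refl.
  - now apply sum_n_m_le_loc.
Qed.

Lemma sum_n_m_le_subrange (u : nat -> R) p q m n :
  (forall k, (p <= k <= q)%nat -> 0 <= u k) -> (p <= m)%nat -> (n <= q)%nat ->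
  sum_n_m u m n <= sum_n_m u p q.
Proof.
  intros Hu Hpm Hnq.
  destruct (le_lt_dec m n) as [Hmn|Hnm].
  2:{ rewrite (sum_n_m_zero u m n Hnm). now apply sum_n_m_nonneg. }
  rewrite (sum_n_m_Chasles u p n q) by lia.
  assert (0 <= sum_n_m u (S n) q) by (apply sum_n_m_nonneg; intros; apply Hu; lia).
  destruct m as [|m].
  { replace p with 0%nat by lia. repeat change (plus ?x ?y) with (x + y). lra. }
  rewrite (sum_n_m_Chasles u p m n) by lia.
  assert (0 <= sum_n_m u p m) by (apply sum_n_m_nonneg; intros; apply Hu; lia).
  repeat change (plus ?x ?y) with (x + y). lra.
Qed.

Lemma double_sum_sq_diff (x g : nat -> R) p q :
  sum_n_m (fun k => sum_n_m (fun n => x k * x n * (g n - g k) ^ 2) p q) p q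
  = 2 * (sum_n_m x p q * sum_n_m (fun n => x n * g n ^ 2) p q
         - sum_n_m (fun n => x n * g n) p q ^ 2).
Proof.
  set (M := sum_n_m x p q).
  set (P := sum_n_m (fun n => x n * g n ^ 2) p q).
  set (Q := sum_n_m (fun n => x n * g n) p q).
  rewrite (sum_n_m_ext _ (fun k => P * x k + M * (x k * g k ^ 2) + (-2 * Q) * (x k * g k))).
  { rewrite !sum_n_m_Rplus, !sum_n_m_Rmult_l. fold M P Q. eq_in R. ring. }
  intros k.
  rewrite (sum_n_m_ext _ (fun n => x k * (x n * g n ^ 2) + (x k * g k ^ 2) * x n
                                   + (-2 * x k * g k) * (x n * g n))) by (intros; eq_in R; ring).
  rewrite !sum_n_m_Rplus, !sum_n_m_Rmult_l. fold M P Q. eq_in R. ring.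
Qed.

Definition energy (x : nat -> R) (G : nat -> C) (p q : nat) : R :=
  sum_n_m (fun k => sum_n_m (fun n => x k * x n * Cmod (G n - G k) ^ 2) p q) p q.

Lemma energy_eq (x : nat -> R) (G : nat -> C) p q :
  energy x G p q
  = 2 * (sum_n_m x p q * sum_n_m (fun n => x n * Cmod (G n) ^ 2) p q
         - (sum_n_m (fun n => x n * Re (G n)) p q ^ 2
            + sum_n_m (fun n => x n * Im (G n)) p q ^ 2)).
Proof.
  unfold energy.
  rewrite (sum_n_m_ext (fun n => x n * Cmod (G n) ^ 2)
                       (fun n => x n * Re (G n) ^ 2 + x n * Im (G n) ^ 2))
    by (intros n; rewrite Cmod2_alt; eq_in R; ring).
  rewrite sum_n_m_Rplus.
  rewrite (sum_n_m_ext _ (fun k =>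
             sum_n_m (fun n => x k * x n * (Re (G n) - Re (G k)) ^ 2) p q
           + sum_n_m (fun n => x k * x n * (Im (G n) - Im (G k)) ^ 2) p q)).
  { rewrite sum_n_m_Rplus, !double_sum_sq_diff. eq_in R. ring. }
  intros k. rewrite <- sum_n_m_Rplus. apply sum_n_m_ext. intros n.
  rewrite Cmod2_alt. unfold Re, Im. simpl. eq_in R. ring.
Qed.

Lemma energy_translate (x : nat -> R) (G : nat -> C) (z : C) p q :
  energy x (fun n => G n - z)%C p q = energy x G p q.
Proof.
  apply sum_n_m_ext; intros k. apply sum_n_m_ext; intros n.
  do 3 f_equal. eq_in C. ring.
Qed.

Lemma energy_mul_le_extend (x : nat -> R) (G : nat -> C) p q p' q' e :
  (forall u : nat -> R, sum_n_m u p' q' = sum_n_m u p q + u e) -> 0 <= x e ->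
  energy x G p q * sum_n_m x p' q' <= energy x G p' q' * sum_n_m x p q.
Proof.
  intros Hext Hxe.
  rewrite <- (energy_translate x G (G e) p q), <- (energy_translate x G (G e) p' q').
  rewrite !energy_eq, !Hext.
  replace (G e - G e)%C with (RtoC 0) by ring.
  rewrite Cmod_0. simpl.
  set (A := sum_n_m (fun n => x n * Re (G n - G e)%C) p q).
  set (B := sum_n_m (fun n => x n * Im (G n - G e)%C) p q).
  assert (0 <= A ^ 2 + B ^ 2) by nra.
  nra.
Qed.

Lemma Cmod_sum_n_m_le (f : nat -> C) p q m n :
  norm2_sq p q f <= 1 -> (p <= m)%nat -> (n <= q)%nat ->
  Cmod (sum_n_m f m n) <= INR (S q - p) + 1.
Proof.
  intros Hf Hpm Hnq.
  (* [|f j| <= 1 + |f j|^2] bounds the sum without taking square roots. *)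
  apply Rle_trans with (sum_n_m (fun j => 1 + Cmod (f j) ^ 2) m n).
  - eapply Rle_trans; [exact (@norm_sum_n_m C_AbsRing C_NormedModule f m n)|].
    apply sum_n_m_le; intros j.
    change (norm (f j)) with (Cmod (f j)). pose proof (Cmod_ge_0 (f j)). nra.
  - eapply Rle_trans.
    + apply (sum_n_m_le_subrange _ p q); [|lia|lia].
      intros j _. pose proof (pow2_ge_0 (Cmod (f j))). lra.
    + rewrite sum_n_m_Rplus, sum_n_m_const. unfold norm2_sq in Hf. lra.
Qed.

Lemma norm2_sq_extend p q p' q' e (f : nat -> C) :
  supported_in p q f -> (e < p \/ q < e)%nat ->
  (forall u : nat -> R, sum_n_m u p' q' = sum_n_m u p q + u e) ->
  norm2_sq p' q' f = norm2_sq p q f.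
Proof.
  intros Hf He Hext. unfold norm2_sq.
  rewrite Hext, (Hf e He), Cmod_0. ring.
Qed.

Lemma Cmod_partial_sum (f : nat -> C) k n :
  Cmod (partial_sum f k n) = Cmod (sum_n f n - sum_n f k)%C.
Proof.
  unfold partial_sum.
  destruct (Nat.le_ge_cases k n) as [Hkn|Hnk].
  - rewrite Nat.min_l, Nat.max_r, (@sum_n_m_sum_n C_AbelianGroup) by lia. reflexivity.
  - rewrite Nat.min_r, Nat.max_l, (@sum_n_m_sum_n C_AbelianGroup) by lia.
    rewrite <- Copp_minus_distr, Cmod_opp. reflexivity.
Qed.

Section Interval_functional.

Variable alpha : nat -> C.

Lemma l_fun_energy (f : nat -> C) p q :
  l_fun alpha p q f = energy (fun k => Cmod (alpha k) ^ 2) (sum_n f) p q.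
Proof.
  apply sum_n_m_ext; intros k. apply sum_n_m_ext; intros n.
  destruct (Nat.eqb_spec n k) as [->|_].
  - replace (sum_n f k - sum_n f k)%C with (RtoC 0) by ring.
    rewrite Cmod_0. eq_in R. ring.
  - rewrite !Cmod_mult, Cmod_partial_sum. eq_in R. ring.
Qed.

Lemma l_fun_mul_le_extend (f : nat -> C) p q p' q' e :
  (forall u : nat -> R, sum_n_m u p' q' = sum_n_m u p q + u e) ->
  l_fun alpha p q f * mu alpha p' q' <= l_fun alpha p' q' f * mu alpha p q.
Proof.
  intros Hext. rewrite !l_fun_energy.
  apply (energy_mul_le_extend _ _ _ _ _ _ e); [exact Hext | apply pow2_ge_0].
Qed.

Lemma l_fun_le p q (f : nat -> C) : norm2_sq p q f <= 1 ->
  l_fun alpha p q f <= (INR (S q - p) + 1) ^ 2 * mu alpha p q ^ 2.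
Proof.
  intros Hf. set (K := INR (S q - p) + 1).
  apply Rle_trans with (sum_n_m (fun k => sum_n_m (fun n =>
      K ^ 2 * Cmod (alpha k) ^ 2 * Cmod (alpha n) ^ 2) p q) p q).
  - apply sum_n_m_le_loc; intros k Hk. apply sum_n_m_le_loc; intros n Hn.
    assert (0 <= K ^ 2 * Cmod (alpha k) ^ 2 * Cmod (alpha n) ^ 2)
      by (apply Rmult_le_pos; [apply Rmult_le_pos|]; apply pow2_ge_0).
    destruct (Nat.eqb n k); [assumption|].
    assert (Hps : Cmod (partial_sum f k n) <= K)
      by (apply (Cmod_sum_n_m_le f p q); lia || assumption).
    pose proof (Cmod_ge_0 (partial_sum f k n)).
    rewrite !Cmod_mult, !Rpow_mult_distr.
    replace (K ^ 2 * Cmod (alpha k) ^ 2 * Cmod (alpha n) ^ 2)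
      with (Cmod (alpha k) ^ 2 * Cmod (alpha n) ^ 2 * K ^ 2) by ring.
    apply Rmult_le_compat_l; [apply Rmult_le_pos; apply pow2_ge_0|].
    apply pow_incr. lra.
  - rewrite (sum_n_m_ext _ (fun k => (K ^ 2 * Cmod (alpha k) ^ 2) * mu alpha p q)).
    + rewrite (sum_n_m_ext _ (fun k => (K ^ 2 * mu alpha p q) * Cmod (alpha k) ^ 2))
        by (intros; eq_in R; ring).
      rewrite sum_n_m_Rmult_l. unfold mu. apply Req_le. eq_in R. ring.
    + intros k. apply sum_n_m_Rmult_l.
Qed.

Lemma ratio_set_bounded p q : 0 < mu alpha p q ->
  exists M, forall y, ratio_set alpha p q y -> y <= M.
Proof.
  intros Hmu. exists ((INR (S q - p) + 1) ^ 2 * mu alpha p q).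
  intros y (f & _ & Hf & ->).
  apply Rle_div_l; [exact Hmu|].
  eapply Rle_trans; [exact (l_fun_le p q f Hf)|]. apply Req_le. ring.
Qed.

Lemma ratio_set_nonempty p q : exists y, ratio_set alpha p q y.
Proof.
  exists (l_fun alpha p q (fun _ => RtoC 0) / mu alpha p q), (fun _ => RtoC 0).
  repeat split.
  unfold norm2_sq. rewrite Cmod_0, sum_n_m_const. lra.
Qed.

Lemma mu_pos p q :
  ~ (forall k, (p <= k <= q)%nat -> alpha k = 0%C) -> 0 < mu alpha p q.
Proof.
  intros Hnz.
  destruct (not_all_ex_not _ _ Hnz) as [k Hk].
  destruct (imply_to_and _ _ Hk) as [Hkpq Hak].
  apply Rlt_le_trans with (sum_n_m (fun j => Cmod (alpha j) ^ 2) k k).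
  - rewrite sum_n_n. apply pow_lt, Cmod_gt_0, Hak.
  - apply sum_n_m_le_subrange; [intros; apply pow2_ge_0 | lia | lia].
Qed.

Lemma L_le_extend p q p' q' e :
  (p' <= p)%nat -> (q <= q')%nat -> (e < p \/ q < e)%nat ->
  (forall u : nat -> R, sum_n_m u p' q' = sum_n_m u p q + u e) ->
  L alpha p q <= L alpha p' q'.
Proof.
  intros Hp Hq He Hext. unfold L.
  destruct (excluded_middle_informative
              (forall k, (p' <= k <= q')%nat -> alpha k = 0%C)) as [HJ|HJ];
  destruct (excluded_middle_informative
              (forall k, (p <= k <= q)%nat -> alpha k = 0%C)) as [HI|HI].
  - apply Rle_refl.
  - exfalso. apply HI. intros k Hk. apply HJ. lia.
  - apply sqrt_pos.
  - apply sqrt_le_1_alt, real_Lub_Rbar_le.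
    + apply ratio_set_nonempty.
    + apply ratio_set_bounded, mu_pos, HJ.
    + intros y (f & Hf & Hnorm & ->).
      exists (l_fun alpha p' q' f / mu alpha p' q'). split.
      * exists f. repeat split.
        -- intros k Hk. apply Hf. lia.
        -- rewrite (norm2_sq_extend p q p' q' e); assumption.
      * apply Rdiv_le_of_cross_mul_le; [apply mu_pos, HI | apply mu_pos, HJ |].
        exact (l_fun_mul_le_extend f p q p' q' e Hext).
Qed.

Lemma L_succ_l_le a b : (a <= b)%nat -> L alpha (S a) b <= L alpha a b.
Proof.
  intros Hab. apply (L_le_extend (S a) b a b a); try lia.
  intros u. rewrite (sum_Sn_m u a b Hab). apply Rplus_comm.
Qed.

Lemma L_le_succ_r a b : (a <= S b)%nat -> L alpha a b <= L alpha a (S b).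
Proof.
  intros Hab. apply (L_le_extend a b a (S b) (S b)); try lia.
  intros u. exact (sum_n_Sm u a b Hab).
Qed.

End Interval_functional.

Theorem lemma3p2 (alpha : nat -> C) (Halpha : in_l2 alpha) :
  (forall a a' b : nat, (a <= a')%nat -> (a' < b)%nat ->
     L alpha a' b <= L alpha a b) /\
  (forall a b b' : nat, (a < b)%nat -> (b <= b')%nat ->
     L alpha a b <= L alpha a b').
Proof.
  split.
  - intros a a' b Haa' Ha'b. induction Haa' as [|a' Haa' IH].
    + apply Rle_refl.
    + eapply Rle_trans; [apply L_succ_l_le; lia | apply IH; lia].
  - intros a b b' Hab Hbb'. induction Hbb' as [|b' Hbb' IH].
    + apply Rle_refl.
    + eapply Rle_trans; [exact IH | apply L_le_succ_r; lia].
Qed.
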